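(* Let $\mathcal V$ be a finite vocabulary, $L\ge 1$ a sequence length, and $p_{\mathrm{data}}$ a distribution on $\mathcal V^L$ that factorizes over positions: $$p_{\mathrm{data}}(x)=\prod_{i=1}^{L} q^i_{x^i},$$ where each $q^i$ is a probability distribution on $\mathcal V$. Suppose the diffusion language model $p_\theta$ is optimally trained in the sense that for every partially masked sequence $x_t$ and every masked position $i$ of $x_t$, $p_\theta(x_0^i=v\mid x_t)=q^i_v$ for all $v\in\mathcal V$. Let $p_{\mathrm{lcr}}$ and $p_{\mathrm{dlcr}}$ be the distributions on $\mathcal V^L$ of the sequences produced (starting from the fully masked sequence) by low-confidence remasking and by dynamic low-confidence remasking with any threshold $\tau\in(0,1]$, respectively, as defined in the context. Then $$\mathcal H(p_{\mathrm{lcr}})\le \mathcal H(p_{\mathrm{data}}),\qquad \mathcal H(p_{\mathrm{dlcr}})\le \mathcal H(p_{\mathrm{data}}),$$ where $\mathcal H$ denotes the Shannon entropy of a distribution on $\mathcal V^L$.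
   Context: Superscripts index positions in a sequence of length $L$ over vocabulary $\mathcal V$; there is an extra mask symbol. The positions $1,\dots,L$ are partitioned into consecutive blocks of length $B$ (with $B$ dividing $L$), and blocks are generated one after another from left to right; generation of a block starts only after every position of the previous block has been decoded. Generation starts from the fully masked sequence. At each denoising step with current partially decoded sequence $x_t$, for every still-masked position $i$ in the current block one independently samples a token $y^i\sim p_\theta(x_0^i=\cdot\mid x_t)$ and assigns it confidence $c^i=p_\theta(x_0^i=y^i\mid x_t)$. Low-confidence remasking (with number of steps equal to block length, so one token per step): the single masked position of the current block with the highest confidence is set to its sampled token $y^i$, and all other masked positions remain masked (their samples are discarded). Dynamic low-confidence remasking with threshold $\tau$: the position with the highest confidence is decoded, and in addition every masked position in the current block whose confidence strictly exceeds $\tau$ is set to its sampled token; all remaining positions stay masked. Ties in confidence are broken by a fixed deterministic order. Low-confidence remasking coincides with dynamic low-confidence remasking with $\tau=1$. *)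

From HB Require Import structures.
From mathcomp Require Import all_boot all_order all_algebra all_fingroup.
From mathcomp Require Import reals exp.
Set Implicit Arguments. Unset Strict Implicit. Unset Printing Implicit Defensive.
Import Order.TTheory GRing.Theory Num.Theory.
Local Open Scope ring_scope.

(* Positions are 'I_L (0-indexed); position i lies in block i %/ B.
   A partially decoded sequence is a state : 'I_L -> option V, with None = mask. *)
Definition state (V : finType) (L : nat) := {ffun 'I_L -> option V}.

Section Generation.
Variables (R : realType) (V : finType) (L B : nat).
(* fixed deterministic tie-breaking order: smaller [sigma i] wins *)
Variable sigma : {perm 'I_L}.
(* thr = None : low-confidence remasking; thr = Some tau : dynamic, threshold tau *)
Variable thr : option R.
(* the model: ptheta x i v = p_theta(x_0^i = v | x_t = x) *)
Variable ptheta : state V L -> 'I_L -> V -> R.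

(* masked positions of the current block, i.e. of the leftmost block that
   still contains a masked position *)
Definition cur_block (x : state V L) : {set 'I_L} :=
  [set i | (x i == None) &&
           [forall j : 'I_L, (x j == None) ==> (i %/ B <= j %/ B)%N]].

(* probability of the vector of samples y (y i = Some y^i for i in the
   current block, None elsewhere); samples are independent *)
Definition sample_weight (x y : state V L) : R :=
  \prod_(i : 'I_L)
     (if i \in cur_block x then (if y i is Some v then ptheta x i v else 0)
      else (if y i is None then 1 else 0)).

Definition conf (x y : state V L) (i : 'I_L) : R :=
  if y i is Some v then ptheta x i v else 0.

Definition is_best (x y : state V L) (i : 'I_L) : bool :=
  [forall j in cur_block x,
     (conf x y j < conf x y i) ||
     ((conf x y j == conf x y i) && (sigma i <= sigma j)%N)].

Definition decoded (x y : state V L) : {set 'I_L} :=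
  [set i in cur_block x |
     is_best x y i || (if thr is Some tau then tau < conf x y i else false)].

Definition update (x y : state V L) : state V L :=
  [ffun i => if i \in decoded x y then y i else x i].

Definition step (d : state V L -> R) : state V L -> R :=
  fun x' => \sum_(x : state V L) d x *
              \sum_(y : state V L) sample_weight x y * (update x y == x')%:R.

Definition fully_masked : state V L := [ffun _ => None].

Definition init_dist : state V L -> R := fun x => (x == fully_masked)%:R.

(* Each step decodes at least one position while masks remain, and is the
   identity on fully decoded sequences; so L steps finish generation. *)
Definition gen_dist (z : {ffun 'I_L -> V}) : R :=
  iter L step init_dist [ffun i => Some (z i)].

End Generation.

Definition p_lcr (R : realType) (V : finType) (L B : nat) (sigma : {perm 'I_L})
  (ptheta : state V L -> 'I_L -> V -> R) : {ffun 'I_L -> V} -> R :=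
  gen_dist B sigma None ptheta.

Definition p_dlcr (R : realType) (V : finType) (L B : nat) (sigma : {perm 'I_L})
  (tau : R) (ptheta : state V L -> 'I_L -> V -> R) : {ffun 'I_L -> V} -> R :=
  gen_dist B sigma (Some tau) ptheta.

Definition p_data (R : realType) (V : finType) (L : nat) (q : 'I_L -> V -> R)
  : {ffun 'I_L -> V} -> R :=
  fun z => \prod_(i : 'I_L) q i (z i).

Definition entropy (R : realType) (T : finType) (p : T -> R) : R :=
  - \sum_(t : T) (if p t == 0 then 0 else p t * ln (p t)).

(* For a partially decoded sequence x put Psi(x) = sum_i psi_i(x^i), where
   psi_i(v) = ln q^i_v at decoded positions and psi_i = sum_v q^i_v ln q^i_v,
   the mean log-probability of a fresh sample, at masked ones.  Under an
   optimal model the samples of a step are drawn from the q^i, and a position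
   is only more likely to be kept when its sampled token is more probable:
   exchanging the sample at i with an independent copy shows that the event
   "i is decoded" is positively correlated with ln q^i_{y^i}.  Hence the
   expected potential never decreases along generation.  It starts at
   -H(p_data) and ends at E_p[ln p_data], and Gibbs' inequality
   E_p[ln p_data] <= E_p[ln p] = -H(p) concludes. *)
From HB Require Import structures.
From mathcomp Require Import all_boot all_order all_algebra all_fingroup.
From mathcomp Require Import reals exp.
From mathcomp Require Import ring lra zify.
Import Order.TTheory GRing.Theory Num.Theory.
Local Open Scope ring_scope.
Set Implicit Arguments. Unset Strict Implicit.

Lemma sumr_option (M : nmodType) (V : finType) (F : option V -> M) :
  \sum_(o : option V) F o = F None + \sum_(v : V) F (Some v).
Proof.
rewrite (bigD1 None) //=; congr (_ + _).
rewrite (reindex_omap Some id) //=; last by case=> // v _.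
by apply: eq_bigl => v; rewrite eqxx.
Qed.

Lemma sum_indicator_mul (R : pzSemiRingType) (T : finType) (u : T) (f : T -> R) :
  \sum_(x : T) (x == u)%:R * f x = f u.
Proof.
rewrite (bigD1 u) //= eqxx mul1r big1 ?addr0 // => x /negbTE ->.
by rewrite mul0r.
Qed.

Section RealFacts.
Variable R : realType.

Lemma ln_prod (I : finType) (F : I -> R) : (forall i, 0 < F i) ->
  ln (\prod_i F i) = \sum_i ln (F i).
Proof.
move=> F_gt0.
suff [] : 0 < \prod_i F i /\ ln (\prod_i F i) = \sum_i ln (F i) by [].
apply: (big_rec2 (fun a b => 0 < a /\ ln a = b)); first by rewrite ln1.
move=> i a b _ [a_gt0 <-]; split; first exact: mulr_gt0.
by rewrite lnM ?posrE.
Qed.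

Lemma gibbs_ln (p r : R) : 0 < p -> 0 < r -> p * ln r + p - r <= p * ln p.
Proof.
move=> p_gt0 r_gt0.
have : ln (1 + (r / p - 1)) <= r / p - 1.
  by apply: le_ln1Dx; rewrite ltrBrDr addrC subrr divr_gt0.
rewrite addrC subrK ln_div ?posrE // => /(ler_wpM2l (ltW p_gt0)).
have -> : p * (r / p - 1) = r - p by field; rewrite gt_eqF.
lra.
Qed.

(* [b] may hold only where [a] is the larger of the two, [b'] only where [c]
   is; zero arguments are neutralised by the factor [a * c]. *)
Lemma mul_indicator_ln_ge0 (a c : R) (b b' : bool) : 0 <= a -> 0 <= c ->
  (a < c -> b -> b') -> (c < a -> b' -> b) ->
  0 <= a * c * ((b%:R - b'%:R) * (ln a - ln c)).
Proof.
move=> a_ge0 c_ge0 ac bc.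
have [->|a_neq0] := eqVneq a 0; first by rewrite !mul0r.
have [->|c_neq0] := eqVneq c 0; first by rewrite mulr0 mul0r.
have a_gt0 : 0 < a by rewrite lt_def a_neq0.
have c_gt0 : 0 < c by rewrite lt_def c_neq0.
apply: mulr_ge0; first by rewrite mulr_ge0 ?ltW.
case: (ltgtP a c) => [lt_ac|lt_ca|->]; last by rewrite subrr mulr0.
- have : ln a < ln c by rewrite ltr_ln ?posrE.
  move: (ac lt_ac); clear ac bc.
  by case: b; case: b' => /= imp; rewrite ?subrr ?mul0r //; [move: (imp isT)|lra].
- have : ln c < ln a by rewrite ltr_ln ?posrE.
  move: (bc lt_ca); clear ac bc.
  by case: b; case: b' => /= imp; rewrite ?subrr ?mul0r //; [lra|move: (imp isT)].
Qed.

End RealFacts.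

Section ProductDistribution.
Variables (R : realType) (I V : finType) (q : I -> V -> R).
Hypothesis q_ge0 : forall i v, 0 <= q i v.
Hypothesis q_sum1 : forall i, \sum_(v : V) q i v = 1.

Lemma sum_prod_dist : \sum_(z : {ffun I -> V}) \prod_j q j (z j) = 1.
Proof. by rewrite -bigA_distr_bigA; apply: big1 => j _; apply: q_sum1. Qed.

Lemma sum_prod_dist_marginal i (g : V -> R) :
  \sum_(z : {ffun I -> V}) (\prod_j q j (z j)) * g (z i) = \sum_v q i v * g v.
Proof.
have gE z : (\prod_j q j (z j)) * g (z i) =
    \prod_j (if j == i then q j (z j) * g (z j) else q j (z j)).
  rewrite (bigD1 i) //= [RHS](bigD1 i) //= eqxx mulrAC; congr (_ * _).
  by apply: eq_bigr => j /negbTE ->.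
under eq_bigr do rewrite gE.
rewrite -(bigA_distr_bigA (fun j v => if j == i then q j v * g v else q j v)).
rewrite (bigD1 i) //= [X in _ * X]big1 ?mulr1 => [|j /negbTE ->//].
by apply: eq_bigr => v _; rewrite eqxx.
Qed.

Lemma entropy_prod_dist :
  entropy (fun z : {ffun I -> V} => \prod_j q j (z j)) =
  - \sum_i \sum_v q i v * ln (q i v).
Proof.
rewrite /entropy; congr (- _).
transitivity (\sum_(z : {ffun I -> V})
                (\prod_j q j (z j)) * \sum_i ln (q i (z i))).
  apply: eq_bigr => z _ /=; case: eqP => [->|/eqP pz_neq0]; first by rewrite mul0r.
  rewrite ln_prod // => j; rewrite lt_def q_ge0 andbT.
  by apply: contraNneq pz_neq0 => qj0; apply/prodf_eq0; exists j => //; rewrite qj0.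
under eq_bigr do rewrite mulr_sumr.
rewrite exchange_big /=; apply: eq_bigr => i _.
exact: (sum_prod_dist_marginal i (fun v => ln (q i v))).
Qed.

End ProductDistribution.

Section DecisionRule.
Variables (R : realType) (V : finType) (L B : nat).
Variables (sigma : {perm 'I_L}) (thr : option R).
Variable ptheta : state V L -> 'I_L -> V -> R.

Local Notation cur := (@cur_block V L B).
Local Notation conf := (conf ptheta).
Local Notation decoded := (decoded B sigma thr ptheta).

Lemma cur_blockP (x : state V L) i : i \in cur x -> x i = None.
Proof. by rewrite inE => /andP[/eqP]. Qed.

Lemma cur_block_nonempty (x : state V L) i0 : x i0 = None ->
  exists i, i \in cur x.
Proof.
move=> /eqP xi0.
case: (@arg_minnP _ i0 (fun i => x i == None) (fun i : 'I_L => i %/ B)%N xi0).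
move=> i xi i_min.
by exists i; rewrite inE xi; apply/forall_inP.
Qed.

Lemma decoded_cur x y i : i \in decoded x y -> i \in cur x.
Proof. by rewrite inE => /andP[]. Qed.

Lemma exists_best x y i0 : i0 \in cur x ->
  exists2 i, i \in cur x & is_best B sigma ptheta x y i.
Proof.
move=> i0_cur.
pose ord i j := (conf x y j < conf x y i) ||
                ((conf x y j == conf x y i) && (sigma i <= sigma j)%N).
have ord_refl : reflexive ord by move=> i; rewrite /ord eqxx leqnn orbT.
have ord_trans : transitive ord.
  move=> j i k /orP[ji|/andP[/eqP ji ji']] /orP[kj|/andP[/eqP kj kj']].
  - by rewrite /ord (lt_trans kj ji).
  - by rewrite /ord kj ji.
  - by rewrite /ord -ji kj.
  - by rewrite /ord kj ji eqxx (leq_trans ji' kj') orbT.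
have ord_total : total ord.
  move=> i j; rewrite /ord.
  by case: (ltgtP (conf x y i) (conf x y j)) => //= _; rewrite leq_total.
case: (@extremumP _ _ ord i0 (mem (cur x)) id ord_refl ord_trans ord_total i0_cur).
move=> i i_cur i_best.
by exists i => //; apply/forall_inP => j; apply: i_best.
Qed.

Lemma decoded_nonempty x y i0 : i0 \in cur x -> exists i, i \in decoded x y.
Proof.
by move=> /(exists_best y) [i i_cur i_best]; exists i; rewrite inE i_cur i_best.
Qed.

Lemma decoded_conf_mono (x y y' : state V L) (i : 'I_L) :
  (forall j, j != i -> y' j = y j) -> conf x y' i < conf x y i -> i \in decoded x y' -> i \in decoded x y.
Proof.
move=> yy' lt_conf; rewrite !inE => /andP[i_cur]; rewrite i_cur /=.
have confE j : j != i -> conf x y' j = conf x y j by rewrite /conf => /yy' ->.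
case/orP => [/forall_inP best | above]; last first.
  by apply/orP; right; case: thr above => // tau /lt_trans; apply.
apply/orP; left; apply/forall_inP => j j_cur.
have [->|ji] := eqVneq j i; first by rewrite eqxx leqnn orbT.
have := best j j_cur; rewrite confE // => /orP[/lt_trans ->//|/andP[/eqP ->]].
by rewrite lt_conf.
Qed.

Lemma updateE x y i :
  update B sigma thr ptheta x y i = if i \in decoded x y then y i else x i.
Proof. by rewrite ffunE. Qed.

End DecisionRule.

Section Generation.
Variables (R : realType) (V : finType) (L B : nat).
Variable q : 'I_L -> V -> R.
Hypothesis q_ge0 : forall i v, 0 <= q i v.
Hypothesis q_sum1 : forall i, \sum_(v : V) q i v = 1.
Variable ptheta : state V L -> 'I_L -> V -> R.
Hypothesis ptheta_opt : forall (x : state V L) (i : 'I_L), x i = None ->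
  forall v, ptheta x i v = q i v.
Variables (sigma : {perm 'I_L}) (thr : option R).

Local Notation state := (state V L).
Local Notation cur := (@cur_block V L B).
Local Notation weight := (sample_weight B ptheta).
Local Notation update := (update B sigma thr ptheta).
Local Notation decoded := (decoded B sigma thr ptheta).
Local Notation step := (step B sigma thr ptheta).

Definition sample_factor (x : state) i (o : option V) : R :=
  if i \in cur x then (if o is Some v then ptheta x i v else 0)
  else (if o is None then 1 else 0).

Lemma sample_factor_cur x i o : i \in cur x ->
  sample_factor x i o = if o is Some v then q i v else 0.
Proof.
move=> i_cur; rewrite /sample_factor i_cur.
by case: o => // v; rewrite ptheta_opt ?(cur_blockP i_cur).
Qed.

Lemma sample_factor_ge0 x i o : 0 <= sample_factor x i o.
Proof.
rewrite /sample_factor; case: ifP => i_cur; case: o => // v.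
by rewrite ptheta_opt ?(cur_blockP i_cur).
Qed.

Lemma sample_weightE x y i :
  weight x y = sample_factor x i (y i) * \prod_(j | j != i) sample_factor x j (y j).
Proof. exact: bigD1. Qed.

Lemma sample_weight_ge0 x y : 0 <= weight x y.
Proof. by apply: prodr_ge0 => i _; apply: sample_factor_ge0. Qed.

Lemma sample_factor_neq0 x y i : weight x y != 0 -> sample_factor x i (y i) != 0.
Proof. by apply: contraNneq => f0; apply/prodf_eq0; exists i => //; apply/eqP. Qed.

Lemma sum_sample_weight x : \sum_y weight x y = 1.
Proof.
rewrite /sample_weight -(bigA_distr_bigA (sample_factor x)).
apply: big1 => i _; rewrite sumr_option /sample_factor.
case: ifP => i_cur; last by rewrite big1 ?addr0.
rewrite add0r -[RHS](q_sum1 i); apply: eq_bigr => v _.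
by rewrite ptheta_opt ?(cur_blockP i_cur).
Qed.

Lemma step_expectation (d f : state -> R) :
  \sum_x' step d x' * f x' = \sum_x d x * \sum_y weight x y * f (update x y).
Proof.
under eq_bigr do rewrite mulr_suml.
rewrite exchange_big /=; apply: eq_bigr => x _.
under eq_bigr do rewrite -mulrA mulr_suml.
rewrite -mulr_sumr exchange_big /=; congr (_ * _); apply: eq_bigr => y _.
under eq_bigr do rewrite -mulrA.
rewrite -mulr_sumr; congr (_ * _).
by under eq_bigr do rewrite eq_sym; rewrite sum_indicator_mul.
Qed.

Lemma step_ge0 d : (forall x, 0 <= d x) -> forall x, 0 <= step d x.
Proof.
move=> d_ge0 x'; apply: sumr_ge0 => x _; rewrite mulr_ge0 //.
by apply: sumr_ge0 => y _; rewrite mulr_ge0 ?sample_weight_ge0.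
Qed.

Lemma sum_step d : \sum_x step d x = \sum_x d x.
Proof.
under eq_bigr do rewrite -[step d _]mulr1.
rewrite step_expectation; apply: eq_bigr => x _.
by under eq_bigr do rewrite mulr1; rewrite sum_sample_weight mulr1.
Qed.

Definition mean_log i := \sum_v q i v * ln (q i v).

Definition site_potential i (o : option V) :=
  if o is Some v then ln (q i v) else mean_log i.

Definition potential (x : state) := \sum_i site_potential i (x i).

Definition set_at (y : state) i (o : option V) : state :=
  [ffun j => if j == i then o else y j].

(* Exchanges the sample at [i] with an independent copy [v] of it. *)
Definition swap_at i (p : state * V) : state * V :=
  if p.1 i is Some u then (set_at p.1 i (Some p.2), u) else p.

Lemma swap_atK i : involutive (swap_at i).
Proof.
case=> y v; rewrite /swap_at /=; case yi: (y i) => [u|] /=; last by rewrite yi.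
rewrite ffunE eqxx; congr (_, _).
by apply/ffunP => j; rewrite !ffunE; case: eqP => [->|//]; rewrite yi.
Qed.

Definition decoded_gain x i y :=
  (i \in decoded x y)%:R * (site_potential i (y i) - mean_log i).

Section DecodedGain.
Variables (x : state) (i : 'I_L).
Hypothesis i_cur : i \in cur x.

Definition gain_pair (p : state * V) : R :=
  weight x p.1 * (i \in decoded x p.1)%:R * q i p.2 *
    (site_potential i (p.1 i) - ln (q i p.2)).

Lemma sum_gain_pair :
  \sum_y weight x y * decoded_gain x i y = \sum_p gain_pair p.
Proof.
rewrite -(pair_bigA _ (fun y v => gain_pair (y, v))) /=.
apply: eq_bigr => y _; rewrite /gain_pair /=.
under [RHS]eq_bigr do rewrite -mulrA.
rewrite -mulr_sumr mulrA; congr (_ * _).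
under [RHS]eq_bigr do rewrite mulrBr.
by rewrite sumrB -mulr_suml q_sum1 mul1r.
Qed.

Lemma gain_pair_swap_ge0 p : 0 <= gain_pair p + gain_pair (swap_at i p).
Proof.
case: p => y v; rewrite /swap_at /=; case yi: (y i) => [u|]; last first.
  by rewrite /gain_pair /= (sample_weightE _ _ i) yi sample_factor_cur // !mul0r addr0.
set y' := set_at y i (Some v).
have y'E j : j != i -> y' j = y j by rewrite ffunE => /negbTE ->.
have y'i : y' i = Some v by rewrite ffunE eqxx.
have rest : \prod_(j | j != i) sample_factor x j (y' j) =
            \prod_(j | j != i) sample_factor x j (y j).
  by apply: eq_bigr => j /y'E ->.
rewrite /gain_pair /= (sample_weightE x y i) (sample_weightE x y' i) rest.
rewrite yi y'i !sample_factor_cur //=.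
set rest_w := \prod_(j | j != i) _.
have -> : forall D D' : bool,
    q i u * rest_w * D%:R * q i v * (ln (q i u) - ln (q i v)) +
    q i v * rest_w * D'%:R * q i u * (ln (q i v) - ln (q i u)) =
    rest_w * (q i u * q i v * ((D%:R - D'%:R) * (ln (q i u) - ln (q i v)))).
  by move=> D D'; ring.
apply: mulr_ge0; first by apply: prodr_ge0 => j _; apply: sample_factor_ge0.
have x_i := cur_blockP i_cur.
have conf_y : conf ptheta x y i = q i u by rewrite /conf yi ptheta_opt.
have conf_y' : conf ptheta x y' i = q i v by rewrite /conf y'i ptheta_opt.
apply: mul_indicator_ln_ge0 => // lt_conf; apply: decoded_conf_mono.
- by move=> j /y'E.
- by rewrite conf_y conf_y'.
- by move=> j /y'E ->.
- by rewrite conf_y conf_y'.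
Qed.

Lemma decoded_gain_ge0 : 0 <= \sum_y weight x y * decoded_gain x i y.
Proof.
rewrite sum_gain_pair.
have swapE : \sum_p gain_pair p = \sum_p gain_pair (swap_at i p).
  exact: (reindex_inj (inv_inj (swap_atK i))).
have : 0 <= \sum_p gain_pair p + \sum_p gain_pair (swap_at i p).
  by rewrite -big_split sumr_ge0 // => p _; apply: gain_pair_swap_ge0.
rewrite -swapE; lra.
Qed.

End DecodedGain.

Lemma potential_update x : potential x <= \sum_y weight x y * potential (update x y).
Proof.
rewrite -subr_ge0 -[X in _ - X]mul1r -(sum_sample_weight x) mulr_suml -sumrB.
under eq_bigr do rewrite -mulrBr /potential -sumrB mulr_sumr.
rewrite exchange_big sumr_ge0 // => i _ /=.
case i_cur: (i \in cur x); last first.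
  apply: sumr_ge0 => y _; rewrite updateE.
  case: ifP => [/decoded_cur|_]; last by rewrite subrr mulr0.
  by rewrite i_cur.
apply: le_trans (decoded_gain_ge0 i_cur) (ler_sum _ _) => y _.
rewrite updateE /decoded_gain.
case: ifP => i_dec; last by rewrite subrr mul0r mulr0.
by rewrite (cur_blockP i_cur) mul1r.
Qed.

Lemma step_potential d : (forall x, 0 <= d x) ->
  \sum_x d x * potential x <= \sum_x step d x * potential x.
Proof.
move=> d_ge0; rewrite step_expectation; apply: ler_sum => x _.
by rewrite ler_wpM2l ?potential_update.
Qed.

Definition masked (x : state) : {set 'I_L} := [set i | x i == None].

Definition reachable (k : nat) (x : state) : bool :=
  (#|masked x| <= L - k)%N && [forall i, if x i is Some v then 0 < q i v else true].

Lemma sampled_cur x y j : weight x y != 0 -> j \in cur x ->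
  exists2 v, y j = Some v & 0 < q j v.
Proof.
move=> /(sample_factor_neq0 j) + j_cur; rewrite sample_factor_cur //.
by case: (y j) => [v qv_neq0|/eqP//]; exists v => //; rewrite lt_def qv_neq0 q_ge0.
Qed.

Lemma masked_update_sub x y : weight x y != 0 ->
  masked (update x y) \subset masked x.
Proof.
move=> w_neq0; apply/subsetP => i; rewrite !inE updateE.
case: ifP => // /decoded_cur i_cur.
by have [v -> _] := sampled_cur w_neq0 i_cur.
Qed.

Lemma masked_update_proper x y i0 : weight x y != 0 -> x i0 = None ->
  masked (update x y) \proper masked x.
Proof.
move=> w_neq0 /(cur_block_nonempty B) [i1 /(decoded_nonempty sigma thr ptheta y)].
move=> [i i_dec]; have i_cur := decoded_cur i_dec.
apply/properP; split; first exact: masked_update_sub.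
exists i; first by rewrite inE (cur_blockP i_cur).
by have [v yi _] := sampled_cur w_neq0 i_cur; rewrite inE updateE i_dec yi.
Qed.

Lemma reachable_update k x y : reachable k x -> weight x y != 0 ->
  reachable k.+1 (update x y).
Proof.
case/andP => card_masked decoded_pos w_neq0; apply/andP; split.
  have [masked0|[i0]] := set_0Vmem (masked x).
    by have := subset_leq_card (masked_update_sub w_neq0); rewrite masked0 cards0; lia.
  rewrite inE => /eqP /(masked_update_proper w_neq0) /proper_card.
  by move: card_masked; lia.
apply/forallP => i; rewrite updateE; case: ifP => [i_dec|_].
  by have [v -> //] := sampled_cur w_neq0 (decoded_cur i_dec).
exact: (forallP decoded_pos i).
Qed.

Lemma step_reachable d k : (forall x, d x != 0 -> reachable k x) ->
  forall x', step d x' != 0 -> reachable k.+1 x'.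
Proof.
move=> d_reach x'; apply: contraNT => not_reach; apply/eqP/big1 => x _.
have [->|dx_neq0] := eqVneq (d x) 0; first by rewrite mul0r.
rewrite big1 ?mulr0 // => y _.
have [->|w_neq0] := eqVneq (weight x y) 0; first by rewrite mul0r.
case: eqP => [upd_x|_]; last by rewrite mulr0.
by move: not_reach; rewrite -upd_x reachable_update ?d_reach.
Qed.

Local Notation dist k := (iter k step (@init_dist R V L)).

Lemma iter_step_ge0 k x : 0 <= dist k x.
Proof. by elim: k x => [x|k IH]; [apply: ler0n|apply: step_ge0]. Qed.

Lemma sum_iter_step k : \sum_x dist k x = 1.
Proof.
elim: k => [|k IH] /=; last by rewrite sum_step.
rewrite -(sum_indicator_mul (fully_masked V L) (fun _ => 1)).
by apply: eq_bigr => x _; rewrite mulr1.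
Qed.

Lemma iter_step_reachable k x : dist k x != 0 -> reachable k x.
Proof.
elim: k x => [x|k IH]; last exact: step_reachable.
rewrite /init_dist pnatr_eq0 eqb0 negbK => /eqP ->; apply/andP; split.
  by rewrite subn0 -[X in (_ <= X)%N]card_ord max_card.
by apply/forallP => i; rewrite ffunE.
Qed.

Lemma mean_log_le_iter_step k : \sum_i mean_log i <= \sum_x dist k x * potential x.
Proof.
elim: k => [|k IH] /=.
  by rewrite sum_indicator_mul ler_sum // => i _; rewrite ffunE.
apply: le_trans IH _; exact: step_potential (iter_step_ge0 k).
Qed.

Definition complete (z : {ffun 'I_L -> V}) : state := [ffun i => Some (z i)].

(* [v0] only serves as a default value for masked positions, which carry no mass. *)
Lemma sum_complete_states (v0 : V) (d f : state -> R) :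
  (forall x, d x != 0 -> reachable L x) ->
  \sum_x d x * f x = \sum_z d (complete z) * f (complete z).
Proof.
move=> d_reach.
rewrite (bigID (fun x : state => [forall i, x i != None])) /=.
rewrite [X in _ + X]big1 ?addr0 => [|x /forallPn [i]]; last first.
  have [->|/d_reach /andP[]] := eqVneq (d x) 0; first by rewrite mul0r.
  rewrite subnn leqn0 cards_eq0 => /eqP /setP /(_ i).
  by rewrite !inE negbK => ->.
have completeK (x : state) :
    [forall i, x i != None] -> complete [ffun i => odflt v0 (x i)] = x.
  by move=> /forallP x_some; apply/ffunP => i; rewrite !ffunE; case: (x i) (x_some i).
rewrite (reindex_onto complete _ completeK); apply: eq_bigl => z.
apply/andP; split; first by apply/forallP => i; rewrite ffunE.
by apply/eqP/ffunP => i; rewrite !ffunE.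
Qed.

Local Notation gen := (gen_dist B sigma thr ptheta).

Lemma gen_dist_support z i : gen z != 0 -> 0 < q i (z i).
Proof.
by move=> /iter_step_reachable /andP[_ /forallP /(_ i)]; rewrite ffunE.
Qed.

Lemma sum_gen_dist (v0 : V) : \sum_z gen z = 1.
Proof.
have := sum_complete_states v0 (fun _ => 1) (@iter_step_reachable L).
under eq_bigr do rewrite mulr1; rewrite sum_iter_step => ->.
by apply: eq_bigr => z _; rewrite mulr1.
Qed.

Lemma mean_log_le_gen_dist (v0 : V) :
  \sum_i mean_log i <= \sum_z gen z * \sum_i ln (q i (z i)).
Proof.
apply: le_trans (mean_log_le_iter_step L) _.
rewrite (sum_complete_states v0 _ (@iter_step_reachable L)) ler_sum // => z _.
by rewrite ler_wpM2l ?iter_step_ge0 // ler_sum // => i _; rewrite ffunE.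
Qed.

Theorem entropy_gen_dist_le (v0 : V) : entropy gen <= entropy (p_data q).
Proof.
rewrite /p_data entropy_prod_dist // /entropy lerN2.
apply: le_trans (mean_log_le_gen_dist v0) _.
have <- : \sum_z (gen z * \sum_i ln (q i (z i)) + gen z - \prod_i q i (z i)) =
          \sum_z gen z * \sum_i ln (q i (z i)).
  by rewrite sumrB big_split /= sum_gen_dist // sum_prod_dist // addrK.
apply: ler_sum => z _.
have [->|gz_neq0] := eqVneq (gen z) 0.
  by rewrite mul0r !add0r oppr_le0 prodr_ge0.
have q_pos i := gen_dist_support i gz_neq0.
rewrite -ln_prod // gibbs_ln ?prodr_gt0 //.
by rewrite lt_def gz_neq0 iter_step_ge0.
Qed.

End Generation.

Theorem mainTheorem1 (R : realType) (V : finType) (L B : nat)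
  (hL : (0 < L)%N) (hB : (0 < B)%N) (hBL : (B %| L)%N)
  (q : 'I_L -> V -> R)
  (hq0 : forall i v, 0 <= q i v)
  (hq1 : forall i, \sum_(v : V) q i v = 1)
  (ptheta : state V L -> 'I_L -> V -> R)
  (hopt : forall (x : state V L) (i : 'I_L), x i = None ->
            forall v, ptheta x i v = q i v)
  (sigma : {perm 'I_L}) (tau : R) (htau : 0 < tau <= 1) :
  entropy (p_lcr B sigma ptheta) <= entropy (p_data q) /\
  entropy (p_dlcr B sigma tau ptheta) <= entropy (p_data q).
Proof.
have [v0 _|V_empty] := pickP (@predT V); last first.
  by have := hq1 (Ordinal hL); rewrite big_pred0 // => /eqP; rewrite eq_sym oner_eq0.
by split; apply: (entropy_gen_dist_le B hq0 hq1 hopt _ _ v0).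
Qed.
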